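(* Let $F$ be a formally real field, $L=F(I)$ with $I^2=-1$, let $\mathfrak k$ be the maximal compact subalgebra of a Kac--Moody algebra over $F$ with simply laced diagram $D$ on vertices $v_1,\dots,v_n$, labelled so that $\{v_1,\dots,v_r\}$ is an inclusion-maximal independent set. Let $\rho:\mathfrak k\to\operatorname{End}_L(V)$, $V=L^{m}$ with $m=2^{n-r}$, be the generalized spin representation obtained by starting with $X_i\mapsto\tfrac12 I\in\operatorname{End}(L^1)$ for $i\le r$ and successively, for $t=r,r+1,\dots,n-1$, extending a generalized spin representation $\rho_t$ of $\mathfrak k_{\le t}$ on $L^{s}$ to $\mathfrak k_{\le t+1}$ on $L^{s}\oplus L^{s}$ by $\rho_{t+1}|_{\mathfrak k_{\le t}}=\rho_t\oplus(\rho_t\circ s_0)$ and $\rho_{t+1}(X_{t+1})=\begin{pmatrix}0&\tfrac12I\,\mathrm{id}_s\\ \tfrac12I\,\mathrm{id}_s&0\end{pmatrix}$, where $s_0(X_i)=-X_i$ if $v_i$ is adjacent to $v_{t+1}$ and $s_0(X_i)=X_i$ otherwise. Then the $F$-Lie algebra $\operatorname{im}(\rho)\subseteq\operatorname{End}_L(V)$ is reductive. If moreover $D$ has no isolated vertices, then $\operatorname{im}(\rho)$ is semisimple.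
   Context: A field is formally real if $-1$ is not a sum of squares. A set of vertices is independent if it spans no edge. $\mathfrak k_{\le t}$ denotes the Lie algebra with generators $X_1,\dots,X_t$ and relations $[X_i,[X_i,X_j]]=-X_j$ for adjacent $v_i,v_j$, $[X_i,X_j]=0$ for non-adjacent $i\ne j$ ($i,j\le t$); for $t=n$ this is $\mathfrak k$ by Berman's theorem ($X_i=e_i-f_i$). A generalized spin representation is a Lie algebra homomorphism $\rho$ into $\operatorname{End}(L^s)$ with $\rho(X_i)^2=-\tfrac14\mathrm{id}_s$ for all generators. *)

From HB Require Import structures.
From mathcomp Require Import all_boot all_order all_algebra all_field.
Set Implicit Arguments. Unset Strict Implicit. Unset Printing Implicit Defensive.
Import GRing.Theory.
Local Open Scope ring_scope.

Definition formally_real (F : fieldType) : Prop :=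
  forall s : seq F, \sum_(x <- s) x ^+ 2 != -1.

Fixpoint msz (d : nat) : nat := if d is d'.+1 then msz d' + msz d' else 1%N.

Lemma msz_exp d : msz d = (2 ^ d)%N.
Proof. elim: d => [|d IH] //=. by rewrite IH expnS mul2n addnn. Qed.

Section Spin.
Variables (F : fieldType) (L : fieldExtType F) (I : L).
Variables (n r : nat) (adj : rel 'I_n).

Definition adjn (u : nat) (i : 'I_n) : bool :=
  [exists j : 'I_n, (val j == u) && adj j i].

(* spin d i = rho_{r+d}(X_i) (0-based vertex indices; meaningful for i < r+d):
   start with X_i |-> (1/2) I on L^1, and at step d -> d+1 (new generator
   with index r+d) use rho_t (+) (rho_t o s_0) and the antidiagonal block. *)
Fixpoint spin (d : nat) (i : 'I_n) : 'M[L]_(msz d) :=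
  match d with
  | 0 => (I / 2%:R)%:M
  | d'.+1 =>
      if val i == (r + d')%N then
        block_mx 0 (I / 2%:R)%:M (I / 2%:R)%:M 0
      else
        block_mx (spin d' i) 0 0
                 ((if adjn (r + d') i then -1 else 1) *: spin d' i)
  end.
End Spin.

(* Lie-algebra notions for F-subspaces of End_L(L^m) = 'M[L]_m, viewed as an
   F-Lie algebra (F acts by scalars c%:A in L). *)
Section Lie.
Variables (F : fieldType) (L : fieldExtType F) (m : nat).
Notation M := 'M[L]_m.

Definition lbr (A B : M) : M := A *m B - B *m A.

Definition Fscale (c : F) (A : M) : M := (c%:A : L) *: A.

Definition Fsubspace (S : M -> Prop) : Prop :=
  [/\ S 0, forall A B, S A -> S B -> S (A + B)
     & forall (c : F) A, S A -> S (Fscale c A)].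

Inductive lie_gen (G : M -> Prop) : M -> Prop :=
  | lg_gen A : G A -> lie_gen G A
  | lg_zero : lie_gen G 0
  | lg_add A B : lie_gen G A -> lie_gen G B -> lie_gen G (A + B)
  | lg_scale c A : lie_gen G A -> lie_gen G (Fscale c A)
  | lg_br A B : lie_gen G A -> lie_gen G B -> lie_gen G (lbr A B).

Inductive Fspan (G : M -> Prop) : M -> Prop :=
  | sp_gen A : G A -> Fspan G A
  | sp_zero : Fspan G 0
  | sp_add A B : Fspan G A -> Fspan G B -> Fspan G (A + B)
  | sp_scale c A : Fspan G A -> Fspan G (Fscale c A).

Fixpoint derived (h : M -> Prop) (k : nat) : M -> Prop :=
  match k with
  | 0 => h
  | k'.+1 => Fspan (fun C => exists A B, derived h k' A /\ derived h k' B
                                        /\ C = lbr A B)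
  end.

Definition solvable_lie (h : M -> Prop) : Prop :=
  exists k, forall A, derived h k A -> A = 0.

Definition lie_ideal (g h : M -> Prop) : Prop :=
  [/\ Fsubspace h, (forall A, h A -> g A)
     & forall A B, g A -> h B -> h (lbr A B)].

Definition lie_center (g : M -> Prop) (A : M) : Prop :=
  g A /\ forall B, g B -> lbr A B = 0.

Definition semisimple_lie (g : M -> Prop) : Prop :=
  forall h, lie_ideal g h -> solvable_lie h -> forall A, h A -> A = 0.

Definition reductive_lie (g : M -> Prop) : Prop :=
  forall h, lie_ideal g h -> solvable_lie h -> forall A, h A -> lie_center g A.
End Lie.

Definition spin_image (F : fieldType) (L : fieldExtType F) (I : L)
    {n : nat} (r : nat) (adj : rel 'I_n) : 'M[L]_(msz (n - r)) -> Prop :=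
  lie_gen (fun A => exists i : 'I_n, A = spin I r adj (n - r) i).
Arguments spin_image [F L] I {n} r adj _.

From HB Require Import structures.
From mathcomp Require Import all_boot all_order all_algebra all_field ring.
Import GRing.Theory.
Local Open Scope ring_scope.

(* Let g be the F-Lie algebra generated by the images X_i of the generators
   under the spin representation.  The trace form (A, B) |-> tr (A B) is invariant.  If it is
      anisotropic on g, every solvable ideal of g is central (descend its
      derived series), so g is reductive; if moreover every generator of g is
      a bracket of elements of g, the center is trivial and g is semisimple.
   2. Linear algebra.  Matrices A + I B with A antisymmetric and B symmetric
      over F form an F-Lie algebra on which tr (Z Z) is minus the sum of the
      squares of the entries of A and B; as F is formally real, the trace form
      is anisotropic there.
   3. The spin representation.  Each X_i is I times a symmetric matrix, so g
      lies in the algebra of part 2; and [X_j, [X_j, X_i]] = - X_i for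
      adjacent v_i, v_j, so without isolated vertices every generator is a
      bracket X_i = [X_j, [X_i, X_j]].
   The main theorem combines the three parts; neither L = F(I) nor the
   maximality of the independent set {v_1, ..., v_r} is needed. *)

(* In a formally real field a vanishing sum of squares has vanishing terms:
   otherwise dividing by a nonzero square writes -1 as a sum of squares. *)
Lemma sum_sq_eq0 {F : fieldType} (fr : formally_real F) (s : seq F) :
  \sum_(x <- s) x ^+ 2 = 0 -> all (eq_op^~ 0) s.
Proof.
elim: s => [//|x s IH]; rewrite big_cons /=.
have [-> | x_neq0 sum0] := eqVneq x 0; first by rewrite expr0n add0r.
have sum_s : \sum_(y <- s) y ^+ 2 = - x ^+ 2.
  by apply/eqP; rewrite -addr_eq0 addrC sum0.
case/eqP: (fr [seq y / x | y <- s]); rewrite big_map.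
under eq_bigr do rewrite expr_div_n.
by rewrite -mulr_suml sum_s mulNr divff // expf_neq0.
Qed.

Lemma formally_real_two {F : fieldType} (fr : formally_real F) :
  (2%:R : F) != 0.
Proof.
apply/eqP => two0; move: (fr [:: 1]).
by rewrite big_seq1 expr1n -addr_eq0 -mulr2n two0 eqxx.
Qed.

(* The zmodule identity behind the Jacobi identity for commutators. *)
Lemma jacobi_zmod (V : zmodType) (a b c d e f : V) :
  a - b + d - c = a - e + d - f + e - c + f - b.
Proof.
rewrite (addrAC (a - e + d)) (addrAC (a - e)) subrK.
rewrite (addrAC (a + d - f)) subrK.
by rewrite (addrAC a (-b) d) (addrAC (a + d) (-b) (-c)).
Qed.

Section LieAlgebra.
Context {F : fieldType} {L : fieldExtType F} {m : nat}.
Notation M := 'M[L]_m.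

Lemma lbrN (A B : M) : lbr A B = - lbr B A.
Proof. by rewrite /lbr opprB. Qed.

Lemma lbr0r (A : M) : lbr A 0 = 0.
Proof. by rewrite /lbr mulmx0 mul0mx subrr. Qed.

Lemma lbrNr (A B : M) : lbr A (- B) = - lbr A B.
Proof. by rewrite /lbr mulmxN mulNmx opprB opprK addrC. Qed.

Lemma lbrDr (A B C : M) : lbr A (B + C) = lbr A B + lbr A C.
Proof. by rewrite /lbr mulmxDr mulmxDl opprD addrACA. Qed.

Lemma lbrZr c (A B : M) : lbr A (Fscale c B) = Fscale c (lbr A B).
Proof. by rewrite /lbr /Fscale -scalemxAr -scalemxAl scalerBr. Qed.

Lemma lbr_jacobi (Y A B : M) :
  lbr Y (lbr A B) = lbr (lbr Y A) B + lbr A (lbr Y B).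
Proof.
rewrite /lbr !(mulmxBl, mulmxBr) !mulmxA !opprB !addrA; exact: jacobi_zmod.
Qed.

Lemma mxtrace_lbr (P Q R : M) : \tr (lbr P Q *m R) = \tr (P *m lbr Q R).
Proof.
rewrite /lbr mulmxBl mulmxBr !raddfB /= -!mulmxA; congr (_ - _).
by rewrite mxtrace_mulC -mulmxA.
Qed.

Lemma lie_gen_min (G S : M -> Prop) :
  Fsubspace S -> (forall A B, S A -> S B -> S (lbr A B)) ->
  (forall A, G A -> S A) -> forall A, lie_gen G A -> S A.
Proof. by move=> [S0 SD SZ] Sbr GS A; elim; auto. Qed.

Definition anisotropic (g : M -> Prop) : Prop :=
  forall Z, g Z -> \tr (Z *m Z) = 0 -> Z = 0.

Section Radical.
Context {g h : M -> Prop}.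
Hypotheses (g_aniso : anisotropic g) (h_ideal : lie_ideal g h).

Lemma derived_sub j A : derived h j A -> h A.
Proof.
have [[h0 hD hZ] hg hbr] := h_ideal.
elim: j A => [//|j IH] A /=; elim => //.
- by move=> _ [B [C [/IH hB [/IH hC ->]]]]; apply: hbr => //; apply: hg.
- by move=> ? ? _ ? _ ?; apply: hD.
- by move=> ? ? _ ?; apply: hZ.
Qed.

Lemma derived_ideal j Y A : g Y -> derived h j A -> derived h j (lbr Y A).
Proof.
have [_ _ hbr] := h_ideal.
elim: j Y A => [|j IH] Y A gY /=; first exact: hbr.
elim.
- move=> _ [B [C [hB [hC ->]]]]; rewrite lbr_jacobi.
  by apply: sp_add; apply: sp_gen; [exists (lbr Y B), C | exists B, (lbr Y C)];
    do ?split; auto.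
- by rewrite lbr0r; apply: sp_zero.
- by move=> ? ? _ ? _ ?; rewrite lbrDr; apply: sp_add.
- by move=> ? ? _ ?; rewrite lbrZr; apply: sp_scale.
Qed.

(* Descent along the derived series: if the (j+1)-st derived ideal is
   central in g, so is the j-th.  Both steps use anisotropy together with
   invariance: tr ([A, B] [A, B]) = tr (A [B, [A, B]]). *)
Lemma derived_central_step j :
  (forall A, derived h j.+1 A -> lie_center g A) ->
  (forall A, derived h j A -> lie_center g A).
Proof.
have [_ hg _] := h_ideal.
have in_g k A : derived h k A -> g A by move/derived_sub; apply: hg.
move=> central_next.
have comm A B : derived h j A -> derived h j B -> lbr A B = 0.
  move=> hA hB; have hAB : derived h j.+1 (lbr A B) by apply: sp_gen; exists A, B.
  apply: g_aniso; first exact: in_g hAB.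
  have [_ cAB] := central_next _ hAB.
  by rewrite mxtrace_lbr lbrN cAB ?oppr0 ?mulmx0 ?mxtrace0 //; apply: in_g hB.
move=> A hA; split; first exact: in_g hA.
move=> W gW; have hWA := derived_ideal j W A gW hA.
rewrite lbrN; apply/eqP; rewrite oppr_eq0; apply/eqP.
apply: g_aniso; first exact: in_g hWA.
by rewrite mxtrace_lbr comm ?mulmx0 ?mxtrace0.
Qed.

(* A solvable ideal of g is central: descend the derived series from its
   last (zero) term down to h itself. *)
Lemma solvable_ideal_central : solvable_lie h -> forall A, h A -> lie_center g A.
Proof.
have [[h0 _ _] hg _] := h_ideal.
move=> [k hk].
have descend i : (forall A, derived h i A -> lie_center g A) ->
    forall A, derived h 0 A -> lie_center g A.
  elim: i => [//|i IH] central; apply: IH; exact: derived_central_step.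
apply: (descend k) => A /hk ->; split; first exact: hg.
by move=> B _; rewrite lbrN lbr0r oppr0.
Qed.
End Radical.

Lemma reductive_of_anisotropic (g : M -> Prop) :
  anisotropic g -> reductive_lie g.
Proof. by move=> g_aniso h h_ideal; apply: solvable_ideal_central. Qed.

Lemma semisimple_of_anisotropic (g : M -> Prop) :
  anisotropic g -> (forall A, lie_center g A -> A = 0) -> semisimple_lie g.
Proof.
move=> g_aniso center0 h h_ideal h_solv A hA; apply: center0.
exact: solvable_ideal_central g_aniso h_ideal h_solv A hA.
Qed.

(* A Lie algebra generated by brackets of its own elements has trivial center
   when the trace form is anisotropic: a central Z is orthogonal to every
   bracket, since tr (Z [Y, W]) = tr ([Z, Y] W) = 0, hence to all of g. *)
Lemma center_trivial_of_perfect (G : M -> Prop) :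
  anisotropic (lie_gen G) ->
  (forall X, G X -> exists Y W, [/\ lie_gen G Y, lie_gen G W & X = lbr Y W]) ->
  forall Z, lie_center (lie_gen G) Z -> Z = 0.
Proof.
move=> g_aniso G_perfect Z [gZ cZ]; apply: g_aniso => //.
have orth_br Y W : lie_gen G Y -> \tr (Z *m lbr Y W) = 0.
  by move=> gY; rewrite -mxtrace_lbr cZ // mul0mx mxtrace0.
suff orth A : lie_gen G A -> \tr (Z *m A) = 0 by apply: orth.
elim=> {A} [X /G_perfect [Y [W [gY _ ->]]] | | A B _ oA _ oB | c A _ oA | Y W gY _ _ _].
- exact: orth_br.
- by rewrite mulmx0 mxtrace0.
- by rewrite mulmxDr mxtraceD oA oB addr0.
- by rewrite /Fscale -scalemxAr mxtraceZ oA mulr0.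
- exact: orth_br.
Qed.
End LieAlgebra.

Section SkewHermitian.
Context {F : fieldType} {L : fieldExtType F} (I : L) {m : nat}.
Hypothesis I2 : I ^+ 2 = -1.
Notation lift := (map_mx (in_alg L)).

(* Matrices A + I B with A antisymmetric and B symmetric over F: the
   analogue of skew-Hermitian matrices for L = F(I). *)
Definition skew_hermitian (Z : 'M[L]_m) : Prop :=
  exists A B : 'M[F]_m, [/\ A^T = - A, B^T = B & Z = lift A + I *: lift B].

Lemma mul_lift_re_im (A B A' B' : 'M[F]_m) :
  (lift A + I *: lift B) *m (lift A' + I *: lift B') =
  lift (A *m A' - B *m B') + I *: lift (A *m B' + B *m A').
Proof.
rewrite mulmxDl !mulmxDr -!scalemxAl -!scalemxAr scalerA -expr2 I2 scaleN1r.
rewrite map_mxB map_mxD !map_mxM scalerDr.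
by rewrite [_ - _ *m _]addrC addrACA.
Qed.

Lemma skew_hermitian_Fsubspace : Fsubspace skew_hermitian.
Proof.
split.
- by exists 0, 0; rewrite !trmx0 oppr0 map_mx0 scaler0 addr0.
- move=> _ _ [A [B [hA hB ->]]] [A' [B' [hA' hB' ->]]].
  exists (A + A'), (B + B'); split; rewrite ?linearD /= ?hA ?hA' ?hB ?hB' //.
  by rewrite !map_mxD scalerDr addrACA.
- move=> c _ [A [B [hA hB ->]]]; exists (c *: A), (c *: B).
  split; rewrite ?linearZ /= ?hA ?hB ?scalerN //.
  by rewrite /Fscale !map_mxZ scalerDr !scalerA [I * _]mulrC.
Qed.

Lemma skew_hermitian_lbr (Z Z' : 'M[L]_m) :
  skew_hermitian Z -> skew_hermitian Z' -> skew_hermitian (lbr Z Z').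
Proof.
move=> [A [B [hA hB ->]]] [A' [B' [hA' hB' ->]]].
exists ((A *m A' - B *m B') - (A' *m A - B' *m B)),
       ((A *m B' + B *m A') - (A' *m B + B' *m A)); split.
- rewrite !raddfB /= !trmx_mul hA hA' hB hB' !mulNmx !mulmxN !opprK.
  by rewrite addrC.
- rewrite raddfB !raddfD /= !trmx_mul hA hA' hB hB' !mulNmx !mulmxN !opprK.
  by rewrite addrC [B *m A' + _]addrC [- (B' *m A) - _]addrC.
- by rewrite /lbr !mul_lift_re_im opprD addrACA -scalerBr -!map_mxB.
Qed.

Definition mx_entries (X : 'M[F]_m) : seq F :=
  [seq X p.1 p.2 | p <- index_enum ('I_m * 'I_m)%type].

Lemma mxtrace_mul_tr (X : 'M[F]_m) :
  \tr (X *m X^T) = \sum_(x <- mx_entries X) x ^+ 2.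
Proof.
rewrite big_map -[RHS]/(\sum_(p : 'I_m * 'I_m) X p.1 p.2 ^+ 2).
rewrite -(pair_bigA _ (fun i k => X i k ^+ 2)) /=; apply: eq_bigr => i _.
by rewrite mxE; apply: eq_bigr => k _; rewrite mxE expr2.
Qed.

Lemma mx_entries_eq0 (X : 'M[F]_m) : all (eq_op^~ 0) (mx_entries X) -> X = 0.
Proof.
move/allP => X0; apply/matrixP => i k; rewrite mxE; apply/eqP/X0.
exact: (map_f (fun p : 'I_m * 'I_m => X p.1 p.2) (mem_index_enum (i, k))).
Qed.

(* For Z = A + I B skew-Hermitian, tr (Z Z) = - (sum of the squares of the
   entries of A and B), which vanishes only for Z = 0 when F is formally
   real. *)
Lemma skew_hermitian_anisotropic :
  formally_real F -> anisotropic skew_hermitian.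
Proof.
move=> fr _ [A [B [hA hB ->]]].
have trAB : \tr (A *m B + B *m A) = 0.
  by rewrite mxtraceD -[\tr (B *m A)]mxtrace_tr trmx_mul hA hB mulNmx raddfN subrr.
have trAB2 : \tr (A *m A - B *m B) =
    - \sum_(x <- mx_entries A ++ mx_entries B) x ^+ 2.
  by rewrite big_cat -!mxtrace_mul_tr hA hB mulmxN raddfB raddfN /= opprD opprK.
rewrite mul_lift_re_im mxtraceD mxtraceZ !trace_map_mx trAB trAB2 rmorph0 mulr0.
rewrite addr0 => /eqP; rewrite fmorph_eq0 oppr_eq0 => /eqP /(sum_sq_eq0 fr).
rewrite all_cat => /andP [/mx_entries_eq0 -> /mx_entries_eq0 ->].
by rewrite map_mx0 scaler0 addr0.
Qed.
End SkewHermitian.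

Section SpinRepresentation.
Context {F : fieldType} {L : fieldExtType F} (I : L) {n : nat}.
Variables (r : nat) (adj : rel 'I_n).
Notation X := (spin I r adj).
Notation lift := (map_mx (in_alg L)).

Lemma spin_sym d i : exists S : 'M[F]_(msz d), S^T = S /\ X d i = I *: lift S.
Proof.
have half_lift : ((2%:R : F)^-1)%:A = (2%:R : L)^-1.
  by rewrite -[LHS]/(in_alg L _) fmorphV rmorph_nat.
elim: d i => [|d IH] i /=.
  exists ((2%:R : F)^-1)%:M; rewrite tr_scalar_mx map_scalar_mx.
  by rewrite scale_scalar_mx /= half_lift.
case: eqP => _.
  exists (block_mx 0 ((2%:R : F)^-1)%:M ((2%:R : F)^-1)%:M 0).
  rewrite tr_block_mx !trmx0 tr_scalar_mx map_block_mx !map_mx0 map_scalar_mx.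
  by rewrite scale_block_mx !scaler0 scale_scalar_mx /= half_lift.
have [S [S_sym ->]] := IH i.
case: (adjn _ _).
  exists (block_mx S 0 0 (- S)); rewrite tr_block_mx !trmx0 linearN /= S_sym.
  by rewrite map_block_mx !map_mx0 map_mxN scale_block_mx !scaler0 scaleN1r scalerN.
exists (block_mx S 0 0 S); rewrite tr_block_mx !trmx0 S_sym.
by rewrite map_block_mx !map_mx0 scale_block_mx !scaler0 scale1r.
Qed.

Lemma spin_skew_hermitian d i : skew_hermitian I (X d i).
Proof.
have [S [S_sym ->]] := spin_sym d i.
by exists 0, S; rewrite trmx0 oppr0 map_mx0 add0r.
Qed.

(* Only the generators X_i with i < r + d are meaningful at stage d. *)
Lemma ltn_stage {d : nat} {i : 'I_n} :
  (i < r + d.+1)%N -> val i <> (r + d)%N -> (i < r + d)%N.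
Proof. by rewrite addnS ltnS leq_eqVlt => /orP [/eqP //|]. Qed.

Lemma spin_sq d (i : 'I_n) :
  (i < r + d)%N -> X d i *m X d i = ((I / 2%:R) * (I / 2%:R))%:M.
Proof.
elim: d i => [|d IH] i /= lt_i; first by rewrite mul_scalar_mx scale_scalar_mx.
case: eqP => [_ | new_i];
  rewrite mulmx_block !mul0mx !mulmx0 !addr0 !add0r.
  by rewrite mul_scalar_mx scale_scalar_mx -scalar_mx_block.
have old_i := ltn_stage lt_i new_i.
by case: (adjn _ _); rewrite ?scaleN1r ?scale1r ?mulNmx ?mulmxN ?opprK IH
  -?scalar_mx_block.
Qed.

Lemma adjn_val (u j : 'I_n) : adjn adj (val u) j = adj u j.
Proof.
apply/existsP/idP => [[k /andP [/eqP /val_inj -> //]] | adj_uj].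
by exists u; rewrite eqxx adj_uj.
Qed.

Hypothesis adj_sym : symmetric adj.
Hypothesis indep : forall i j : 'I_n, (i < r)%N -> (j < r)%N -> ~~ adj i j.

Lemma spin_comm d (i j : 'I_n) : (i < r + d)%N -> (j < r + d)%N -> i != j ->
  X d i *m X d j = (if adj i j then -1 else 1) *: (X d j *m X d i).
Proof.
elim: d i j => [|d IH] i j /= lt_i lt_j i_neq_j.
  rewrite addn0 in lt_i lt_j; rewrite (negbTE (indep i j lt_i lt_j)) scale1r.
  by rewrite !mul_scalar_mx !scale_scalar_mx mulrC.
case: eqP => new_i; case: eqP => new_j;
  rewrite !mulmx_block !mul0mx !mulmx0 !addr0 !add0r.
- by case/eqP: i_neq_j; apply: val_inj; exact: etrans new_i (esym new_j).
- rewrite -new_i adjn_val !mul_scalar_mx !mul_mx_scalar.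
  by case: (adj i j); rewrite ?scale_block_mx ?scaleN1r ?scale1r ?scaler0 ?oppr0 ?scalerN ?opprK.
- rewrite -new_j adjn_val adj_sym !mul_scalar_mx !mul_mx_scalar.
  by case: (adj i j); rewrite ?scale_block_mx ?scaleN1r ?scale1r ?scaler0 ?oppr0 ?scalerN ?opprK.
- rewrite -!scalemxAl -!scalemxAr !scalerA.
  rewrite (IH i j (ltn_stage lt_i new_i) (ltn_stage lt_j new_j) i_neq_j).
  rewrite scale_block_mx scaler0 !scalerA; congr (block_mx _ _ _ (_ *: _)).
  by rewrite [LHS]mulrC [X in _ * X]mulrC.
Qed.

Hypotheses (adj_irr : irreflexive adj) (I2 : I ^+ 2 = -1) (two : (2%:R : L) != 0).

(* The defining relation of the maximal compact subalgebra:
   [X_j, [X_j, X_i]] = - X_i for adjacent vertices v_i, v_j. *)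
Lemma spin_adj_relation d (i j : 'I_n) :
  (i < r + d)%N -> (j < r + d)%N -> adj j i ->
  lbr (X d j) (lbr (X d j) (X d i)) = - X d i.
Proof.
move=> lt_i lt_j adj_ji.
have i_neq_j : i != j by apply: contraTneq adj_ji => ->; rewrite adj_irr.
have anti := spin_comm d i j lt_i lt_j i_neq_j.
rewrite adj_sym adj_ji scaleN1r in anti.
have quarter : (I / 2%:R * (I / 2%:R)) *+ 4 = -1 by rewrite -I2; field.
rewrite /lbr anti opprK mulmxDr mulmxDl -mulmxA anti mulmxN mulmxA.
rewrite spin_sq // mul_scalar_mx -[RHS]scaleN1r -quarter -scalerMnl.
by rewrite -opprD opprK -!mulr2n -mulrnA.
Qed.

Lemma spin_as_bracket d (i j : 'I_n) :
  (i < r + d)%N -> (j < r + d)%N -> adj j i ->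
  X d i = lbr (X d j) (lbr (X d i) (X d j)).
Proof.
move=> lt_i lt_j adj_ji.
by rewrite [lbr (X d i) _]lbrN lbrNr spin_adj_relation ?opprK.
Qed.
End SpinRepresentation.

Theorem mainTheorem11 (F : fieldType) (L : fieldExtType F) (I : L)
    (n r : nat) (adj : rel 'I_n) :
  formally_real F ->
  I ^+ 2 = -1 ->
  (<<1%VS; I>>%VS = fullv) ->
  symmetric adj -> irreflexive adj ->
  (r <= n)%N ->
  (forall i j : 'I_n, (i < r)%N -> (j < r)%N -> ~~ adj i j) ->
  (forall j : 'I_n, (r <= j)%N -> exists2 i : 'I_n, (i < r)%N & adj i j) ->
  reductive_lie (spin_image I r adj) /\
  ((forall i : 'I_n, exists j : 'I_n, adj i j) ->
     semisimple_lie (spin_image I r adj)).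
Proof.
move=> fr I2 _ adj_sym adj_irr le_rn indep _.
have im_skew : forall A, spin_image I r adj A -> skew_hermitian I A.
  apply: lie_gen_min; first exact: skew_hermitian_Fsubspace.
    exact: skew_hermitian_lbr.
  by move=> _ [i ->]; apply: spin_skew_hermitian.
have im_aniso : anisotropic (spin_image I r adj).
  by move=> Z /im_skew; apply: skew_hermitian_anisotropic I2 fr Z.
split; first exact: reductive_of_anisotropic.
move=> no_isolated; apply: semisimple_of_anisotropic => //.
have lt_all (i : 'I_n) : (i < r + (n - r))%N by rewrite subnKC.
have two : (2%:R : L) != 0.
  by rewrite -(rmorph_nat (in_alg L)) fmorph_eq0 formally_real_two.
apply: center_trivial_of_perfect => // _ [i ->].
have gen k : spin_image I r adj (spin I r adj (n - r) k) by apply: lg_gen; exists k.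
have [j adj_ij] := no_isolated i.
exists (spin I r adj (n - r) j), (lbr (spin I r adj (n - r) i) (spin I r adj (n - r) j)).
split; [exact: gen | exact: lg_br (gen i) (gen j) | ].
have adj_ji : adj j i by rewrite adj_sym.
by apply: spin_as_bracket => //; apply: lt_all.
Qed.
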